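(* Let $\mathcal{M}=(E,\mathcal{I})$ be a matroid with $|E|=n$ whose ground set is dependent, and suppose we are given real numbers $\widehat{q}_T$ for all $T\subseteq E$ with $|\widehat{q}_T-q_{T,\mathcal{M}}|\le 1/n^2$. Run the following procedure: set $S\leftarrow E$; while there exists a nonempty $T\subseteq S$ with $\widehat{q}_S-\widehat{q}_{S\setminus T}\le \frac{|T|}{2^{20}|S|\log n}$, pick any such $T$ and set $S\leftarrow S\setminus T$; finally output $S$. Then, for all sufficiently large $n$, the output $S$ is nonempty and globally optimal in $\mathcal{M}$, i.e. $q_{S,\mathcal{M}}\ge 1-2^{-20}$ and $p_{T,\mathcal{M}|_S}\ge \frac{|T|}{2^{21}|S|\log n}$ for every $T\subseteq S$.
   Context: $\log$ denotes the base-2 logarithm. For a matroid $\mathcal{N}$ whose ground set $F$ is dependent and a permutation $\pi$ of $F$, $C_\pi$ denotes the first circuit formed when adding elements in the order of $\pi$ (the unique circuit contained in the shortest dependent prefix of $\pi$). For $T\subseteq F$, $p_{T,\mathcal{N}}=\Pr_\pi[C_\pi\cap T\neq\emptyset]$ and $q_{T,\mathcal{N}}=\Pr_\pi[C_\pi\subseteq T]$, with $\pi$ uniformly random over permutations of $F$. $\mathcal{M}|_S$ is the restriction of $\mathcal{M}$ to $S$. A set $S\subseteq E$ is globally optimal in $\mathcal{M}$ (with $n=|E|$) if $q_{S,\mathcal{M}}\ge 1-2^{-20}$ and $p_{T,\mathcal{M}|_S}\ge \frac{|T|}{2^{21}|S|\log n}$ for all $T\subseteq S$. *)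

From Stdlib Require Import Reals.
From mathcomp Require Import all_boot.
Set Implicit Arguments. Unset Strict Implicit. Unset Printing Implicit Defensive.
Local Open Scope R_scope.

Record matroid (T : finType) := Matroid {
  ground : {set T};
  indep : {set T} -> bool }.

Definition is_matroid (T : finType) (M : matroid T) : Prop :=
  [/\ indep M set0,
      (forall I : {set T}, indep M I -> I \subset ground M),
      (forall I J : {set T}, J \subset I -> indep M I -> indep M J) &
      (forall I J : {set T}, indep M I -> indep M J -> (#|I| < #|J|)%N ->
         exists2 x, x \in J :\: I & indep M (x |: I))].

Definition restrict (T : finType) (M : matroid T) (S : {set T}) : matroid T :=
  Matroid S (fun I => indep M I && (I \subset S)).

Definition circuit (T : finType) (M : matroid T) (C : {set T}) : bool :=
  [&& C \subset ground M, ~~ indep M C &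
      [forall x in C, indep M (C :\ x)]].

Definition prefix_set (T : finType) (s : seq T) (k : nat) : {set T} :=
  [set x in take k s].

Definition first_dep (T : finType) (M : matroid T) (s : seq T) : nat :=
  find (fun k => ~~ indep M (prefix_set s k)) (iota 0 (size s).+1).

(* C_pi: the (unique) circuit contained in the shortest dependent prefix. *)
Definition first_circuit (T : finType) (M : matroid T) (s : seq T) : {set T} :=
  odflt set0 [pick C | circuit M C && (C \subset prefix_set s (first_dep M s))].

Definition orderings (T : finType) (M : matroid T) : seq (seq T) :=
  permutations (enum (ground M)).

Definition prob_perm (T : finType) (M : matroid T) (P : seq T -> bool) : R :=
  (INR (count P (orderings M)) / INR (size (orderings M)))%R.

Definition p_of (T : finType) (X : {set T}) (M : matroid T) : R :=
  prob_perm M (fun s => first_circuit M s :&: X != set0).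

Definition q_of (T : finType) (X : {set T}) (M : matroid T) : R :=
  prob_perm M (fun s => first_circuit M s \subset X).

Definition log2 (x : R) : R := (ln x / ln 2)%R.

Definition globally_optimal (T : finType) (M : matroid T) (S : {set T}) : Prop :=
  let n := #|ground M| in
  (q_of S M >= 1 - / 2 ^ 20)%R /\
  forall X : {set T}, X \subset S ->
    (p_of X (restrict M S) >= INR #|X| / (2 ^ 21 * INR #|S| * log2 (INR n)))%R.

Definition removable (T : finType) (n : nat) (qhat : {set T} -> R)
    (S X : {set T}) : Prop :=
  [/\ X \subset S, X != set0 &
      (qhat S - qhat (S :\: X) <= INR #|X| / (2 ^ 20 * INR #|S| * log2 (INR n)))%R].

Inductive reachable (T : finType) (n : nat) (qhat : {set T} -> R) (E : {set T})
  : {set T} -> Prop :=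
| reach_start : reachable n qhat E E
| reach_step S X : reachable n qhat E S -> removable n qhat S X ->
    reachable n qhat E (S :\: X).

Definition procedure_output (T : finType) (n : nat) (qhat : {set T} -> R)
    (E S : {set T}) : Prop :=
  reachable n qhat E S /\ forall X : {set T}, ~ removable n qhat S X.

(* Removing T from S lowers q by at most q^_S - q^_{S\T} + 2/n^2, which the removal
   rule bounds by |T|/(2^20 |S| log n) + 2/n^2.  Since |T|/|S| <= ln |S| - ln |S\T|,
   these losses telescope to at most ln n/(2^20 log n) + 2/n < 2^-20, so q_S stays
   above 1 - 2^-20 and S never becomes empty (q_{empty} = 0).  When the loop stops,
   every nonempty T of S has q^_S - q^_{S\T} > |T|/(2^20 |S| log n), hence
   q_S - q_{S\T} >= |T|/(2^21 |S| log n).  Finally q_S - q_{S\T} <= p_{T,M|S}: if C_pi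
   lies in S but not in S\T, then C_pi is also the first circuit of the induced order
   pi|S in M|S and it meets T, while pi|S is a uniformly random ordering of S. *)

From Stdlib Require Import Reals Lra.
From mathcomp Require Import all_boot.
Set Implicit Arguments. Unset Strict Implicit. Unset Printing Implicit Defensive.

Lemma sub_in_count (T : eqType) (a1 a2 : pred T) (s : seq T) :
  {in s, subpred a1 a2} -> count a1 s <= count a2 s.
Proof.
move=> sub12; rewrite (@eq_in_count _ a1 (predI a1 a2)) ?sub_count //.
  by move=> x /andP [].
by move=> x xs /=; case a1x: (a1 x); rewrite // sub12.
Qed.

Section InsertionPermutations.
Variable T : eqType.

Definition insert_at (i : nat) (x : T) (t : seq T) := take i t ++ x :: drop i t.

Lemma index_insert_at i x t : x \notin t -> i <= size t -> index x (insert_at i x t) = i.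
Proof.
move=> xt it; rewrite /insert_at index_cat ifN ?size_takel //= ?eqxx ?addn0 //.
by apply: contra xt; apply: mem_take.
Qed.

Lemma rem_insert_at i x t : x \notin t -> i <= size t -> rem x (insert_at i x t) = t.
Proof.
move=> xt it; have sz : size (take i t) = i by rewrite size_takel.
rewrite remE index_insert_at // /insert_at take_size_cat // -cat_rcons.
by rewrite drop_size_cat ?size_rcons ?sz // cat_take_drop.
Qed.

Lemma insert_at_index_rem x u : x \in u -> insert_at (index x u) x (rem x u) = u.
Proof.
move=> xu; have iu : index x u < size u by rewrite index_mem.
have sz : size (take (index x u) u) = index x u by rewrite size_takel // ltnW.
rewrite /insert_at remE take_size_cat // drop_size_cat //.
by rewrite -{2}(nth_index x xu) -drop_nth // cat_take_drop.
Qed.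

Lemma perm_insert_at i x t : perm_eq (insert_at i x t) (x :: t).
Proof. by rewrite /insert_at -cat1s perm_catCA /= cat_take_drop. Qed.

Lemma filter_insert_at (a : pred T) i x t : ~~ a x ->
  filter a (insert_at i x t) = filter a t.
Proof.
by move=> ax; rewrite /insert_at filter_cat /= (negbTE ax) -filter_cat cat_take_drop.
Qed.

Lemma permutations_consE x s : x \notin s ->
  perm_eq (permutations (x :: s))
    [seq insert_at i x t | t <- permutations s, i <- iota 0 (size t).+1].
Proof.
move=> xs; have notin_perm t : t \in permutations s -> x \notin t.
  by rewrite mem_permutations => /perm_mem ->.
apply/uniq_perm; first exact: permutations_uniq.
  apply/allpairs_uniq_dep => [|t _|]; rewrite ?permutations_uniq ?iota_uniq //.
  move=> _ _ /allpairsPdep [t [i [tP iP ->]]] /allpairsPdep [u [j [uP jP ->]]] /= Etu.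
  move: iP jP; rewrite !mem_iota !ltnS /= => it ju.
  have eij : i = j.
    by rewrite -(index_insert_at (notin_perm t tP) it) Etu index_insert_at ?notin_perm.
  by rewrite -(rem_insert_at (notin_perm t tP) it) Etu eij rem_insert_at ?notin_perm // -eij.
move=> u; rewrite mem_permutations; apply/idP/allpairsPdep => [pu | [t [i [tP _ ->]]]].
  have xu : x \in u by rewrite (perm_mem pu) mem_head.
  exists (rem x u), (index x u); rewrite insert_at_index_rem //; split => //.
    by rewrite mem_permutations -(perm_cons x) -(permPr pu) perm_sym perm_to_rem.
  have iu : index x u < size u by rewrite index_mem.
  by rewrite mem_iota add0n size_rem // prednK // (leq_ltn_trans _ iu).
rewrite (permPl (perm_insert_at i x t)) perm_cons; by rewrite mem_permutations in tP.
Qed.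

Lemma count_permutations_cons (a : pred T) (P : pred (seq T)) x s :
  x \notin s -> ~~ a x ->
  count (P \o filter a) (permutations (x :: s)) =
  (size s).+1 * count (P \o filter a) (permutations s).
Proof.
move=> xs ax; rewrite (permP (permutations_consE xs)).
have : {in permutations s, forall t, size t = size s}.
  by move=> t; rewrite mem_permutations => /perm_size.
elim: (permutations s) => [|t l IH] size_l; first by rewrite /= muln0.
rewrite allpairs_cons count_cat IH => [|u ul]; last by apply: size_l; rewrite inE ul orbT.
rewrite count_map size_l ?mem_head //.
rewrite (@eq_count _ _ (fun=> P (filter a t))) => [|i /=]; last by rewrite filter_insert_at.
rewrite /= mulnDr; case: (P (filter a t)).
  by rewrite count_predT size_iota /= muln1.
by rewrite count_pred0 muln0.
Qed.

Lemma count_permutations_catl (a : pred T) (P : pred (seq T)) r s :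
  uniq (r ++ s) -> all (predC a) r ->
  count (P \o filter a) (permutations (r ++ s)) * (size s)`! =
  count (P \o filter a) (permutations s) * (size (r ++ s))`!.
Proof.
elim: r => [|x r IH] //= /andP [xrs urs] /andP [ax ar].
by rewrite count_permutations_cons // factS -mulnA IH // mulnCA.
Qed.

End InsertionPermutations.

Section FirstDependentPrefix.
Variables (T : finType) (M : matroid T).
Implicit Types s : seq T.

Lemma prefix_set_sub s i j : i <= j -> prefix_set s i \subset prefix_set s j.
Proof.
by move=> ij; apply/subsetP => x; rewrite !inE -(take_takel s ij); apply: mem_take.
Qed.

Lemma prefix_setS s k : k < size s -> exists x, prefix_set s k.+1 = x |: prefix_set s k.
Proof.
case: s => [//|x0 s'] ks; exists (nth x0 (x0 :: s') k).
by apply/setP => y; rewrite /prefix_set (take_nth x0 ks) !inE mem_rcons inE.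
Qed.

Lemma prefix_set_size s : prefix_set s (size s) = [set x in s].
Proof. by rewrite /prefix_set take_size. Qed.

Lemma dep_prefix_first_dep s : ~~ indep M [set x in s] ->
  ~~ indep M (prefix_set s (first_dep M s)).
Proof.
move=> deps; pose Q k := ~~ indep M (prefix_set s k).
have hasQ : has Q (iota 0 (size s).+1).
  by apply/hasP; exists (size s); rewrite ?mem_iota //= /Q prefix_set_size.
have ltQ : find Q (iota 0 (size s).+1) < (size s).+1 by rewrite has_find size_iota in hasQ.
by have := nth_find 0 hasQ; rewrite nth_iota.
Qed.

Lemma first_dep_min s j : j <= size s -> ~~ indep M (prefix_set s j) ->
  first_dep M s <= j.
Proof.
move=> js depj; rewrite leqNgt; apply/negP => /(before_find 0).
by rewrite nth_iota ?ltnS // add0n depj.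
Qed.

Lemma first_dep_le_size s : ~~ indep M [set x in s] -> first_dep M s <= size s.
Proof. by move=> deps; apply: first_dep_min; rewrite ?prefix_set_size. Qed.

End FirstDependentPrefix.

Section MatroidCircuits.
Variables (T : finType) (M : matroid T).
Hypothesis HM : is_matroid M.
Implicit Types (B C D I J : {set T}) (e : T) (s : seq T).

Lemma indep0 : indep M set0.
Proof. by case: HM. Qed.

Lemma indep_subset I J : J \subset I -> indep M I -> indep M J.
Proof. by case: HM => _ _ + _; apply. Qed.

Lemma indep_augment I J : indep M I -> indep M J -> #|I| < #|J| ->
  exists2 x, x \in J :\: I & indep M (x |: I).
Proof. by case: HM => _ _ _; apply. Qed.

Lemma circuit_minset C :
  circuit M C = (C \subset ground M) && minset [pred B : {set T} | ~~ indep M B] C.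
Proof.
rewrite /circuit; case: (C \subset ground M) => //=.
apply/andP/minsetP => [[depC /forall_inP indCx] | [depC minC]]; split => //.
  move=> B depB BC; apply/eqP; rewrite eqEsubset BC; apply/subsetP => x xC.
  apply: contraNT depB => xB; apply: indep_subset (indCx x xC).
  by rewrite subsetD1 BC.
apply/forall_inP => x xC; apply: contraT => depCx.
by have /setP/(_ x) := minC _ depCx (subD1set C x); rewrite !inE eqxx xC.
Qed.

Lemma circuit_dep C : circuit M C -> ~~ indep M C.
Proof. by case/and3P. Qed.

Lemma circuit_neq0 C : circuit M C -> C != set0.
Proof. by move/circuit_dep; apply: contraNneq => ->; apply: indep0. Qed.

Lemma circuit_sub_eq C1 C2 : circuit M C1 -> circuit M C2 -> C1 \subset C2 -> C1 = C2.
Proof.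
rewrite !circuit_minset => /andP [_ /minsetp dep1] /andP [_ min2].
exact: minsetinf min2 dep1.
Qed.

Lemma dep_has_circuit D : D \subset ground M -> ~~ indep M D ->
  exists2 C, circuit M C & C \subset D.
Proof.
move=> DG depD.
have [C minC CD] := @minset_exists _ [pred B : {set T} | ~~ indep M B] D depD.
by exists C; rewrite // circuit_minset minC (subset_trans CD DG).
Qed.

Lemma indep_extend I J : indep M I -> indep M J ->
  exists J', [/\ J \subset J', J' \subset J :|: I, indep M J' & #|I| <= #|J'|].
Proof.
move=> indI indJ.
pose P := [pred B : {set T} | [&& J \subset B, B \subset J :|: I & indep M B]].
have [|J' maxJ' _] := @maxset_exists _ P J; first by rewrite !inE subxx subsetUl.
have /and3P [JJ' J'JI indJ'] := maxsetp maxJ'.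
exists J'; split => //; rewrite leqNgt; apply/negP => ltJ'I.
have [x /setDP [xI xJ'] indxJ'] := indep_augment indJ' indI ltJ'I.
have PxJ' : P (x |: J').
  rewrite !inE indxJ' (subset_trans JJ' (subsetUr _ _)) subUset sub1set.
  by rewrite in_setU xI orbT J'JI.
by have /setP/(_ x) := maxsetsup maxJ' PxJ' (subsetUr _ _); rewrite !inE eqxx (negbTE xJ').
Qed.

(* If C1 != C2, pick f in C1 \ C2 and extend C1 - f by elements of I to an independent
   set of size |I|; it avoids f, so it is e + I - f, which contains C2. *)
Lemma indep_setU1_circuit_unique I e C1 C2 : indep M I ->
  circuit M C1 -> circuit M C2 -> C1 \subset e |: I -> C2 \subset e |: I -> C1 = C2.
Proof.
move=> indI c1 c2 C1eI C2eI; apply/eqP/negPn/negP => neqC.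
have /subsetPn [f fC1 fC2] : ~~ (C1 \subset C2).
  by apply: contra neqC => /(circuit_sub_eq c1 c2) ->.
have indC1f : indep M (C1 :\ f) by case/and3P: c1 => _ _ /forall_inP; apply.
have [J [C1fJ JC1fI indJ IJ]] := indep_extend indI indC1f.
have fJ : f \notin J.
  apply: contra (circuit_dep c1) => fJ; apply: indep_subset indJ.
  by rewrite -(setD1K fC1) subUset sub1set fJ.
have JeIf : J \subset (e |: I) :\ f.
  rewrite subsetD1 fJ andbT (subset_trans JC1fI) // subUset subsetUr andbT.
  exact: subset_trans (subD1set C1 f) C1eI.
have eJ : J = (e |: I) :\ f.
  apply/eqP; rewrite eqEcard JeIf (leq_trans _ IJ) //.
  have := cardsD1 f (e |: I); rewrite (subsetP C1eI) // cardsU1 => cardeI.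
  by rewrite -(leq_add2l true) -cardeI leq_add2r leq_b1.
by move: (circuit_dep c2); rewrite (indep_subset _ indJ) // eJ subsetD1 C2eI fC2.
Qed.

Lemma first_dep_gt0 s : ~~ indep M [set x in s] -> 0 < first_dep M s.
Proof.
move/dep_prefix_first_dep; rewrite lt0n; apply: contraNneq => ->.
by rewrite /prefix_set take0 (_ : [set x in [::]] = set0) ?indep0.
Qed.

Lemma indep_prefix_first_dep s : ~~ indep M [set x in s] ->
  indep M (prefix_set s (first_dep M s).-1).
Proof.
move=> deps; have k_gt0 := first_dep_gt0 deps.
have /(before_find 0) : (first_dep M s).-1 < first_dep M s by rewrite prednK.
rewrite nth_iota ?add0n => [/negbFE //|].
by rewrite prednK //; apply/leqW/first_dep_le_size.
Qed.

Lemma first_dep_circuit_unique s C1 C2 : ~~ indep M [set x in s] ->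
  circuit M C1 -> circuit M C2 ->
  C1 \subset prefix_set s (first_dep M s) ->
  C2 \subset prefix_set s (first_dep M s) -> C1 = C2.
Proof.
move=> deps c1 c2; have k_gt0 := first_dep_gt0 deps.
have [|x] := @prefix_setS _ s (first_dep M s).-1; first by rewrite prednK // first_dep_le_size.
rewrite prednK // => ->; exact: indep_setU1_circuit_unique (indep_prefix_first_dep deps) c1 c2.
Qed.

Lemma first_circuitE s C : ~~ indep M [set x in s] -> circuit M C ->
  C \subset prefix_set s (first_dep M s) -> first_circuit M s = C.
Proof.
move=> deps cC Ck; rewrite /first_circuit; case: pickP => [C' /andP [cC' C'k] | none] /=.
  exact: first_dep_circuit_unique deps cC' cC C'k Ck.
by have := none C; rewrite cC Ck.
Qed.

Lemma first_circuitP s : [set x in s] \subset ground M -> ~~ indep M [set x in s] ->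
  circuit M (first_circuit M s) /\ first_circuit M s \subset prefix_set s (first_dep M s).
Proof.
move=> sG deps; have [|C cC Ck] := dep_has_circuit _ (dep_prefix_first_dep deps).
  by apply: subset_trans sG; rewrite -prefix_set_size prefix_set_sub // first_dep_le_size.
by rewrite (first_circuitE deps cC Ck).
Qed.

End MatroidCircuits.

Section Restriction.
Variables (T : finType) (M : matroid T) (S : {set T}).
Hypotheses (HM : is_matroid M) (SG : S \subset ground M).

Lemma restrict_is_matroid : is_matroid (restrict M S).
Proof.
split => /=.
- by rewrite indep0 // sub0set.
- by move=> I /andP [].
- move=> I J JI /andP [indI IS]; rewrite (indep_subset HM JI indI).
  exact: subset_trans JI IS.
- move=> I J /andP [indI IS] /andP [indJ JS] ltIJ.
  have [x xJI indxI] := indep_augment HM indI indJ ltIJ.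
  exists x; rewrite // indxI subUset IS sub1set andbT.
  by case/setDP: xJI => /(subsetP JS).
Qed.

Lemma circuit_restrict C : circuit (restrict M S) C = circuit M C && (C \subset S).
Proof.
rewrite /circuit /=; case CS: (C \subset S); rewrite ?andbF ?andbT //=.
rewrite (subset_trans CS SG); congr (_ && _); apply: eq_forallb => x.
by case: (x \in C); rewrite //= (subset_trans (subD1set C x) CS) andbT.
Qed.

(* The prefix of pi|S made of the elements of S among the first first_dep M s ones
   contains C_pi, so the first dependent prefix of pi|S lies inside that of pi. *)
Lemma first_circuit_restrict s :
  [set x in s] \subset ground M -> ~~ indep M [set x in s] ->
  first_circuit M s \subset S ->
  first_circuit (restrict M S) (filter [in S] s) = first_circuit M s.
Proof.
move=> sG deps C0S; have HMS := restrict_is_matroid.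
have [cC0 C0k] := first_circuitP HM sG deps.
set s' := filter [in S] s; set k := first_dep M s in C0k.
pose j := count [in S] (take k s).
have s'S : [set x in s'] \subset S.
  by apply/subsetP => x; rewrite inE mem_filter => /andP [].
have pj : prefix_set s' j = prefix_set s k :&: S.
  apply/setP => x; rewrite /prefix_set /s' -{1}(cat_take_drop k s) filter_cat.
  by rewrite take_size_cat ?size_filter // !inE mem_filter andbC.
have dep_j : ~~ indep (restrict M S) (prefix_set s' j).
  apply: contra _ (circuit_dep cC0) => /andP [indj _].
  by apply: (indep_subset HM) indj; rewrite pj subsetI C0k.
have js' : j <= size s'.
  by rewrite size_filter /j -{2}(cat_take_drop k s) count_cat leq_addr.
have dep_s' : ~~ indep (restrict M S) [set x in s'].
  apply: contra _ dep_j; apply: (indep_subset HMS).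
  by rewrite -prefix_set_size prefix_set_sub.
have [cC' C'k'] := first_circuitP HMS s'S dep_s'.
rewrite circuit_restrict in cC'; case/andP: cC' => cC' _.
symmetry; apply: (first_circuitE HM deps cC').
apply: subset_trans C'k' _.
by rewrite (subset_trans (prefix_set_sub s' (first_dep_min js' dep_j))) // pj subsetIl.
Qed.

End Restriction.

Local Open Scope R_scope.

Lemma INR_fact_gt0 n : 0 < INR n`!.
Proof. by apply/lt_0_INR/ltP; rewrite fact_gt0. Qed.

Section UniformOrderings.
Variable T : finType.
Implicit Types (M : matroid T) (P : pred (seq T)) (S X : {set T}).

Lemma size_orderings M : size (orderings M) = #|ground M|`!.
Proof. by rewrite /orderings size_permutations ?enum_uniq // cardE. Qed.

Lemma orderings_set M s : s \in orderings M -> [set x in s] = ground M.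
Proof.
by rewrite mem_permutations => /perm_mem ps; apply/setP => x; rewrite inE ps mem_enum.
Qed.

Lemma count_orderings_filter M S P : S \subset ground M ->
  (count (P \o filter [in S]) (orderings M) * #|S|`! =
   count P (permutations (enum S)) * #|ground M|`!)%N.
Proof.
move=> SG; set r := enum (ground M :\: S).
have urS : uniq (r ++ enum S).
  rewrite cat_uniq !enum_uniq andbT /=.
  by apply/hasPn => x; rewrite !mem_enum => xS; rewrite in_setD xS.
have rSE : perm_eq (enum (ground M)) (r ++ enum S).
  apply: uniq_perm; rewrite ?enum_uniq // => x.
  rewrite mem_cat !mem_enum in_setD; case xS: (x \in S) => /=; last by rewrite orbF.
  by rewrite (subsetP SG).
have rNS : all (predC [in S]) r by apply/allP => x; rewrite mem_enum in_setD => /andP [].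
rewrite /orderings (permP (perm_permutations rSE)) !cardE (perm_size rSE).
rewrite count_permutations_catl //; congr (_ * _)%N.
apply: eq_in_count => t; rewrite mem_permutations => /perm_mem tS /=.
by congr P; apply/all_filterP/allP => x; rewrite tS mem_enum.
Qed.

Lemma prob_permE M P :
  prob_perm M P = INR (count P (orderings M)) / INR #|ground M|`!.
Proof. by rewrite /prob_perm size_orderings. Qed.

Lemma prob_perm_ge0 M P : 0 <= prob_perm M P.
Proof.
by rewrite prob_permE; apply: Rle_mult_inv_pos; [exact: pos_INR | exact: INR_fact_gt0].
Qed.

Lemma prob_perm_le_predU M (a b c : pred (seq T)) :
  {in orderings M, forall s, a s -> b s || c s} ->
  prob_perm M a <= prob_perm M b + prob_perm M c.
Proof.
move=> abc; rewrite !prob_permE -Rdiv_plus_distr -plus_INR.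
apply/Rmult_le_compat_r/le_INR/leP; first exact/Rlt_le/Rinv_0_lt_compat/INR_fact_gt0.
by rewrite plusE -count_predUI (leq_trans (sub_in_count abc)) ?leq_addr.
Qed.

Lemma prob_perm_restrict M S P : S \subset ground M ->
  prob_perm (restrict M S) P = prob_perm M (P \o filter [in S]).
Proof.
move=> SG; rewrite !prob_permE /=.
have := count_orderings_filter P SG; rewrite /orderings /= => /(f_equal INR).
rewrite !mult_INR => cross.
have := INR_fact_gt0 #|S|; have := INR_fact_gt0 #|ground M| => EF SF.
field_simplify_eq; [by rewrite -cross Rmult_comm | lra].
Qed.

Lemma q_ground M : q_of (ground M) M = 1.
Proof.
rewrite /q_of prob_permE (eq_count (a2 := predT)) ?count_predT ?size_orderings.
  by apply: Rinv_r; apply/Rgt_not_eq/INR_fact_gt0.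
move=> s; rewrite /first_circuit; case: pickP => [C /andP [/and3P [] //] | _].
by rewrite sub0set.
Qed.

Variable M : matroid T.
Hypotheses (HM : is_matroid M) (depE : ~~ indep M (ground M)).

Lemma circuit_first_circuit_orderings s : s \in orderings M -> circuit M (first_circuit M s).
Proof.
move=> /orderings_set sE; have sG : [set x in s] \subset ground M by rewrite sE.
by case: (first_circuitP HM sG); rewrite ?sE.
Qed.

Lemma q_set0 : q_of set0 M = 0.
Proof.
rewrite /q_of prob_permE (eq_in_count (a2 := pred0)) ?count_pred0 /Rdiv ?Rmult_0_l //.
move=> s /circuit_first_circuit_orderings cC /=.
by rewrite subset0; apply/negbTE/(circuit_neq0 HM cC).
Qed.

Lemma q_le_q_setD_p S X : S \subset ground M ->
  q_of S M <= q_of (S :\: X) M + p_of X (restrict M S).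
Proof.
move=> SG; rewrite /p_of prob_perm_restrict //; apply: prob_perm_le_predU => s sO CS /=.
have /orderings_set sE := sO.
rewrite first_circuit_restrict // ?sE //.
case: (boolP (first_circuit M s \subset S :\: X)) => //= /subsetPn [x xC xSX].
apply/set0Pn; exists x; rewrite inE xC /=.
by move: xSX; rewrite inE (subsetP CS x xC) andbT negbK.
Qed.

End UniformOrderings.

Lemma INR_expn m k : INR (m ^ k)%N = INR m ^ k.
Proof. by elim: k => [|k IH] //; rewrite expnS -multE mult_INR IH. Qed.

Lemma Rabs_le_bounds x e : Rabs x <= e -> - e <= x <= e.
Proof.
move=> xe; split; last exact: Rle_trans (Rle_abs x) xe.
by have := Rle_abs (- x); rewrite Rabs_Ropp; lra.
Qed.

Lemma ln_div x y : 0 < x -> 0 < y -> ln (x / y) = ln x - ln y.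
Proof. by move=> x_gt0 y_gt0; rewrite ln_mult ?ln_Rinv //; apply: Rinv_0_lt_compat. Qed.

Lemma ln_le_sub1 x : 0 < x -> ln x <= x - 1.
Proof. by move=> x_gt0; have := exp_ineq1_le (ln x); rewrite exp_ln //; lra. Qed.

Lemma ln_ge0 x : 1 <= x -> 0 <= ln x.
Proof.
move=> x_ge1; rewrite -ln_1; case: (Req_dec x 1) => [-> | x_neq1]; first lra.
by left; apply: ln_increasing; lra.
Qed.

Lemma ln2_lt : ln 2 < 9 / 10.
Proof.
have e1 : 1 + 9 / 20 < exp (9 / 20) by apply: exp_ineq1; lra.
have e2 : exp (9 / 10) = exp (9 / 20) * exp (9 / 20) by rewrite -exp_plus; f_equal; lra.
rewrite -[X in _ < X](ln_exp (9 / 10)); apply: ln_increasing; nra.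
Qed.

Lemma frac_le_ln_diff s t : 0 <= t -> t < s -> t / s <= ln s - ln (s - t).
Proof.
move=> t_ge0 ts; have := ln_le_sub1 (Rdiv_lt_0_compat (s - t) s ltac:(lra) ltac:(lra)).
rewrite ln_div; try lra.
have -> : (s - t) / s - 1 = - (t / s) by field; lra.
lra.
Qed.

Lemma log2_large x : 2 ^ 30 <= x -> 1 <= log2 x /\ 2 ^ 22 * log2 x <= x.
Proof.
move=> x_large; have ln2_gt := ln_lt_2; have ln2_lt := ln2_lt.
have L_ln : log2 x * ln 2 = ln x by rewrite /log2; field; lra.
have ln_x : ln x <= x / 2 ^ 30 - 1 + 30 * ln 2.
  have := ln_le_sub1 (Rdiv_lt_0_compat x (2 ^ 30) ltac:(lra) ltac:(lra)).
  rewrite ln_div ?ln_pow; try lra.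
  have -> : INR 30 = 30 by simpl; lra.
  lra.
have ln_x_ge : ln 2 <= ln x by left; apply: ln_increasing; lra.
split; nra.
Qed.

(* q_S >= 1 - deficit n |S| along the procedure: removing t of the s elements costs at
   most t/(2^20 s log n) + 2/n^2, and t/s <= ln s - ln (s - t). *)
Definition deficit (n s : R) : R :=
  (ln n - ln s) / (2 ^ 20 * log2 n) + 2 * (n - s) / n ^ 2.

Lemma deficit_step n s t : 1 < n -> 1 <= t -> t < s ->
  deficit n s + t / (2 ^ 20 * s * log2 n) + 2 / n ^ 2 <= deficit n (s - t).
Proof.
move=> n_gt1 t_ge1 ts; set D := 2 ^ 20 * log2 n.
have L_gt0 : 0 < log2 n.
  by apply: Rdiv_lt_0_compat; rewrite -ln_1; apply: ln_increasing; lra.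
have D_gt0 : 0 < D by apply: Rmult_lt_0_compat; lra.
have ln_gap : t / (2 ^ 20 * s * log2 n) <= (ln s - ln (s - t)) / D.
  rewrite (_ : t / _ = t / s / D); last by rewrite /D; field; lra.
  apply: Rmult_le_compat_r; first exact/Rlt_le/Rinv_0_lt_compat.
  by apply: frac_le_ln_diff ts; lra.
have noise_gap : 2 / n ^ 2 <= 2 * t / n ^ 2.
  by apply: Rmult_le_compat_r; [apply/Rlt_le/Rinv_0_lt_compat/pow_lt | ]; lra.
rewrite /deficit -/D; rewrite /Rdiv in ln_gap noise_gap *; lra.
Qed.

(* ln n / log2 n = ln 2 < 9/10, and 2 (n - s) / n^2 <= 2 / n is negligible. *)
Lemma deficit_small n s : 2 ^ 30 <= n -> 1 <= s <= n -> deficit n s <= / 2 ^ 20.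
Proof.
move=> n_large [s_ge1 sn]; have [L_ge1 _] := log2_large n_large.
have ln_s := ln_ge0 s_ge1; have ln2_lt := ln2_lt.
have ln_n : ln n = ln 2 * log2 n by rewrite /log2; field; have := ln_lt_2; lra.
have ln_part : (ln n - ln s) / (2 ^ 20 * log2 n) <= 9 / 10 / 2 ^ 20.
  apply: (Rmult_le_reg_r (2 ^ 20 * log2 n)); first nra.
  by rewrite /Rdiv Rmult_assoc Rinv_l; [nra | apply: Rgt_not_eq; nra].
have noise_part : 2 * (n - s) / n ^ 2 <= 2 / n.
  apply: (Rmult_le_reg_r (n ^ 2)); first nra.
  by rewrite /Rdiv !Rmult_assoc Rinv_l; [field_simplify; nra | apply: Rgt_not_eq; nra].
have : 2 / n <= 2 / 2 ^ 30 by apply: Rmult_le_compat_l; [lra | apply: Rinv_le_contravar; lra].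
rewrite /deficit; lra.
Qed.

Lemma noise_le_half_threshold n s t : 2 ^ 22 * log2 n <= n -> 1 <= log2 n ->
  1 <= t -> 0 < s <= n -> 2 / n ^ 2 <= t / (2 ^ 21 * s * log2 n).
Proof.
move=> nL L_ge1 t_ge1 [s_gt0 sn].
have n_gt0 : 0 < n by nra.
have sL_gt0 : 0 < 2 ^ 21 * s * log2 n by nra.
apply: (Rle_trans _ (/ (2 ^ 21 * n * log2 n))).
  have -> : 2 / n ^ 2 = / (n ^ 2 / 2) by field; lra.
  by apply: Rinv_le_contravar; nra.
rewrite /Rdiv -[/ _]Rmult_1_l; apply: Rmult_le_compat; try lra.
  by apply/Rlt_le/Rinv_0_lt_compat; nra.
by apply: Rinv_le_contravar; nra.
Qed.

Section Procedure.
Variables (T : finType) (E : {set T}) (q qhat : {set T} -> R).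
Variable p : {set T} -> {set T} -> R.
Implicit Types S X : {set T}.
Hypotheses (E_large : (2 ^ 30 <= #|E|)%N) (qE : q E = 1) (q0 : q set0 = 0).
Hypothesis qhat_close : forall X, X \subset E -> Rabs (qhat X - q X) <= / INR #|E| ^ 2.
Hypotheses (p_ge0 : forall S X, 0 <= p S X)
  (q_le_p : forall S X, S \subset E -> q S <= q (S :\: X) + p S X).

Let n := INR #|E|.

Lemma n_large : 2 ^ 30 <= n.
Proof. by rewrite -[2]/(INR 2) -INR_expn; apply/le_INR/leP. Qed.

Lemma q_diff_close S X : S \subset E ->
  qhat S - qhat (S :\: X) - 2 / n ^ 2 <= q S - q (S :\: X) <=
  qhat S - qhat (S :\: X) + 2 / n ^ 2.
Proof.
move=> SE; have SXE : S :\: X \subset E by apply: subset_trans (subsetDl S X) SE.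
have := Rabs_le_bounds (qhat_close SE); have := Rabs_le_bounds (qhat_close SXE).
rewrite -/n; lra.
Qed.

Lemma reachable_invariant S : reachable #|E| qhat E S ->
  [/\ S \subset E, S != set0 & 1 - deficit n (INR #|S|) <= q S].
Proof.
have n_ge := n_large; have [L_ge1 _] := log2_large n_ge.
elim: S / => [|S X _ [SE S0 qS] [XS X0 removeX]].
  split => //; first by rewrite -card_gt0 (leq_trans _ E_large) // expn_gt0.
  by rewrite qE /deficit -/n !Rminus_diag /Rdiv !Rmult_0_l Rmult_0_r; lra.
set s := INR #|S|; set t := INR #|X|; change (1 - deficit n s <= q S) in qS.
have t_ge1 : 1 <= t by apply: (le_INR 1); apply/leP; rewrite card_gt0.
have ts : t <= s by apply/le_INR/leP/subset_leq_card.
have sn : s <= n by apply/le_INR/leP/subset_leq_card.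
have defS := deficit_small n_ge (conj (Rle_trans _ _ _ t_ge1 ts) sn).
have [_ drop] := q_diff_close X SE; rewrite -/n -/s -/t in removeX.
have step_le : t / (2 ^ 20 * s * log2 n) <= / 2 ^ 20.
  apply: (Rle_trans _ (s / (2 ^ 20 * s * log2 n))).
    by apply: Rmult_le_compat_r => //; apply/Rlt_le/Rinv_0_lt_compat; nra.
  have -> : s / (2 ^ 20 * s * log2 n) = / (2 ^ 20 * log2 n) by field; nra.
  by apply: Rinv_le_contravar; nra.
have noise_small : 2 / n ^ 2 <= / 2 ^ 20.
  have -> : 2 / n ^ 2 = / (n ^ 2 / 2) by field; lra.
  by apply: Rinv_le_contravar; nra.
have SX0 : S :\: X != set0.
  by apply/negP => /eqP SX0; rewrite SX0 q0 in drop removeX; lra.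
have cardSX : INR #|S :\: X| = s - t.
  by rewrite cardsD (setIidPr XS) minus_INR //; apply/leP/subset_leq_card.
split; rewrite ?cardSX //; first exact: subset_trans (subsetDl S X) SE.
have ts' : t < s.
  suff : 1 <= INR #|S :\: X| by rewrite cardSX; lra.
  by apply: (le_INR 1); apply/leP; rewrite card_gt0.
have := deficit_step (n := n) ltac:(lra) t_ge1 ts'.
lra.
Qed.

Lemma procedure_output_optimal S : procedure_output #|E| qhat E S ->
  [/\ S != set0, 1 - / 2 ^ 20 <= q S &
      forall X, X \subset S -> INR #|X| / (2 ^ 21 * INR #|S| * log2 n) <= p S X].
Proof.
case=> /reachable_invariant [SE S0 qS] stop; have n_ge := n_large.
have [L_ge1 nL] := log2_large n_ge.
have s_ge1 : 1 <= INR #|S| by apply: (le_INR 1); apply/leP; rewrite card_gt0.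
have sn : INR #|S| <= n by apply/le_INR/leP/subset_leq_card.
split => //; first by have := deficit_small n_ge (conj s_ge1 sn); lra.
move=> X XS; have [-> | X0] := eqVneq X set0; first by rewrite cards0 /Rdiv Rmult_0_l.
have t_ge1 : 1 <= INR #|X| by apply: (le_INR 1); apply/leP; rewrite card_gt0.
have jump : INR #|X| / (2 ^ 20 * INR #|S| * log2 n) < qhat S - qhat (S :\: X).
  by apply: Rnot_le_lt => small; apply: (stop X).
rewrite (_ : INR #|X| / (2 ^ 20 * INR #|S| * log2 n) =
    2 * (INR #|X| / (2 ^ 21 * INR #|S| * log2 n))) in jump; last by field; lra.
have := noise_le_half_threshold nL L_ge1 t_ge1 (conj (ltac:(lra) : 0 < INR #|S|) sn).
have [drop _] := q_diff_close X SE; have := q_le_p X SE; lra.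
Qed.

End Procedure.

Theorem mainTheorem6 :
  exists N : nat, forall (T : finType) (M : matroid T),
    is_matroid M -> ~~ indep M (ground M) ->
    (N <= #|ground M|)%N ->
    forall qhat : {set T} -> R,
      (forall X : {set T}, X \subset ground M ->
         Rle (Rabs (Rminus (qhat X) (q_of X M)))
             (Rinv (pow (INR #|ground M|) 2))) ->
      forall S : {set T}, procedure_output #|ground M| qhat (ground M) S ->
        S != set0 /\ globally_optimal M S.
Proof.
exists (2 ^ 30)%N => T M HM depE E_large qhat qhat_close S out.
have [S0 qS pS] := procedure_output_optimal (q := fun X => q_of X M)
  (p := fun S X => p_of X (restrict M S)) E_large (q_ground M) (q_set0 HM depE)
  qhat_close (fun _ _ => prob_perm_ge0 _ _) (q_le_q_setD_p HM depE) out.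
by split => //; split => [|X XS]; apply: Rle_ge; [|apply: pS].
Qed.
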